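(* Let $\mathbf{X}$ be a Banach space, $\mathcal{S}\subset\mathbf{X}$, and let $\mathbb{P}$ be a Borel probability measure on $\mathcal{S}$ of growth order $s_0\in[0,\infty)$. Then $s_0\ge s^\ast_{\mathbf{X}}(\mathcal{S})$.
   Context: Let $(\mathbf{X},\|\cdot\|_{\mathbf{X}})$ be a real Banach space and $\mathcal{S}\subset\mathbf{X}$. A codec is a sequence $((E_R,D_R))_{R\in\mathbb{N}}$ of maps $E_R:\mathcal{S}\to\{0,1\}^R$, $D_R:\{0,1\}^R\to\mathbf{X}$; the distortion is $\delta_{\mathcal{S},\mathbf{X}}(E_R,D_R)=\sup_{\mathbf{x}\in\mathcal{S}}\|\mathbf{x}-D_R(E_R(\mathbf{x}))\|_{\mathbf{X}}$, and $s^\ast_{\mathbf{X}}(\mathcal{S})=\sup\{s\ge0:\exists\text{ codec with }\sup_RR^s\delta_{\mathcal{S},\mathbf{X}}(E_R,D_R)<\infty\}\in[0,\infty]$. $\mathcal{S}$ carries the trace of the Borel $\sigma$-algebra of $\mathbf{X}$. $\mathbb{P}$ has (logarithmic) growth order $s_0$ w.r.t. $\mathbf{X}$ if for every $s>s_0$ there exist $\varepsilon_0,c>0$ with $\mathbb{P}(\mathcal{S}\cap\mathcal{B}(\mathbf{x},\varepsilon;\mathbf{X}))\le2^{-c\varepsilon^{-1/s}}$ for all $\mathbf{x}\in\mathbf{X}$, $\varepsilon\in(0,\varepsilon_0)$ ($\mathcal{B}$ = closed ball). *)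

From HB Require Import structures.
From mathcomp Require Import all_boot all_order all_algebra.
From mathcomp Require Import all_classical all_reals all_analysis.
Set Implicit Arguments. Unset Strict Implicit. Unset Printing Implicit Defensive.
Import Order.TTheory GRing.Theory Num.Theory.
Import numFieldNormedType.Exports.
Local Open Scope classical_set_scope.
Local Open Scope ring_scope.

Definition Borel {R : realType} {X : normedModType R} : set (set X) :=
  <<s [set A : set X | open A] >>.

Definition trace_Borel {R : realType} {X : normedModType R} (S : set X)
  : set (set X) := [set S `&` B | B in Borel].

(* Measurable space used to carry a probability on (S, trace Borel):
   the carrier X with the sigma-algebra generated by the trace sets; a
   probability P on S is encoded as a probability on this space with
   P S = 1. *)
Definition traceS {R : realType} {X : normedModType R} (S : set X) :=
  g_sigma_algebraType (trace_Borel S).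

Definition cball {R : realType} {X : normedModType R} (x : X) (eps : R)
  : set X := [set y | `|x - y| <= eps].

Definition distortion {R : realType} {X : normedModType R} (S : set X)
  (n : nat) (E : X -> n.-tuple bool) (D : n.-tuple bool -> X) : \bar R :=
  ereal_sup [set (`|x - D (E x)|)%:E | x in S].

Definition achievable {R : realType} {X : normedModType R} (S : set X)
  (s : R) : Prop :=
  exists (E : forall n : nat, X -> n.-tuple bool)
         (D : forall n : nat, n.-tuple bool -> X) (C : R),
    forall n : nat, (1 <= n)%N ->
      (((n%:R `^ s)%:E * distortion S (E n) (D n)) <= C%:E)%E.

Definition optimal_exponent {R : realType} {X : normedModType R} (S : set X)
  : \bar R :=
  ereal_sup [set s%:E | s in [set s : R | 0 <= s /\ achievable S s]].

Definition growth_order {R : realType} {X : normedModType R} (S : set X)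
  (P : set (traceS S) -> \bar R) (s0 : R) : Prop :=
  forall s : R, s0 < s ->
    exists eps0 c : R, 0 < eps0 /\ 0 < c /\
      forall (x : X) (eps : R), 0 < eps -> eps < eps0 ->
        (P (S `&` cball x eps) <= (2 `^ (- (c * eps `^ (- s^-1))))%:E)%E.

From HB Require Import structures.
From mathcomp Require Import all_boot all_order all_algebra.
From mathcomp Require Import all_classical all_reals all_analysis.
From mathcomp Require Import lra.
Import Order.TTheory GRing.Theory Num.Theory.
Import numFieldNormedType.Exports.
Local Open Scope classical_set_scope.
Local Open Scope ring_scope.

(** If a rate [s > s0] were achievable, the [2^n] reconstruction points of an
    [n]-bit codec would cover [S] by balls of radius [eps_n ~ n^-s].  For
    [s0 < s' < s] the growth order bounds the mass of each ball by
    [2^-(c eps_n^(-1/s'))], so [1 = P S <= 2^n 2^-(c eps_n^(-1/s'))], i.e.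
    [c eps_n^(-1/s') <= n].  But [eps_n^(-1/s')] grows like [n^(s/s')] and
    [s/s' > 1]: contradiction for large [n]. *)

Section TraceBorel.
Variables (R : realType) (X : normedModType R) (S : set X).

Lemma measurable_trace {B : set X} : open B -> measurable (S `&` B : set (traceS S)).
Proof. by move=> oB; apply: sub_sigma_algebra; exists B => //; exact: sub_sigma_algebra. Qed.

Lemma measurable_traceT : measurable (S : set (traceS S)).
Proof. by have := measurable_trace (@openT X); rewrite setIT. Qed.

Lemma measurable_trace_cball (x : X) (eps : R) :
  measurable (S `&` cball x eps : set (traceS S)).
Proof.
apply: sub_sigma_algebra; exists (cball x eps) => //.
rewrite -[cball x eps]setCK; apply: sigma_algebraC; apply: sub_sigma_algebra.
exact/closed_openC/closed_closed_ball_.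
Qed.

End TraceBorel.

Lemma one_le_powR2 {R : realType} (r : R) : (1 <= 2 `^ r) = (0 <= r).
Proof.
have ln2_gt0 : 0 < ln (2 : R) by apply: ln_gt0; lra.
by rewrite /powR pnatr_eq0 /= !leNgt expR_lt1 pmulr_llt0.
Qed.

(* [1 = P S <= 2^n 2^-a], as the [2^n] reconstruction points cover [S] by
   balls of radius [eps]. *)
Lemma codec_cover_bits {R : realType} {X : normedModType R} {S : set X}
    {P : probability (traceS S) R} {n : nat}
    {E : X -> n.-tuple bool} {D : n.-tuple bool -> X} {eps a : R} :
  P S = 1%E ->
  (forall x, S x -> `|x - D (E x)| <= eps) ->
  (forall x, (P (S `&` cball x eps) <= (2 `^ (- a))%:E)%E) ->
  a <= n%:R.
Proof.
move=> PS err ball.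
pose words := enum {: n.-tuple bool}.
pose F k := S `&` cball (D (nth (nseq_tuple n false) words k)) eps : set (traceS S).
have cover : (P S <= \sum_(k < size words) P (F k))%E.
  apply: content_subadditive => [k _||x Sx]; [exact: measurable_trace_cball|exact: measurable_traceT|].
  rewrite -bigcup_mkord; exists (index (E x) words).
    by rewrite /= index_mem mem_enum.
  by split => //; rewrite /cball /= nth_index ?mem_enum // distrC; exact: err.
have : (1 <= (2 `^ (- a) *+ 2 ^ n)%:E)%E.
  rewrite -PS; apply: (le_trans cover).
  apply: (@le_trans _ _ (\sum_(k < size words) (2 `^ (- a))%:E)%E).
    by apply: lee_sum => k _; exact: ball.
  by rewrite sumEFin sumr_const card_ord -cardE card_tuple card_bool.
rewrite lee_fin -mulr_natr natrX -powR_mulrn ?ler0n // -powRD ?pnatr_eq0 ?implybT //.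
by rewrite one_le_powR2 addrC subr_ge0.
Qed.

Lemma achievable_pointwise_error {R : realType} {X : normedModType R} {S : set X} {s : R} :
  achievable S s ->
  exists (E : forall n : nat, X -> n.-tuple bool) (D : forall n : nat, n.-tuple bool -> X) (C : R),
    0 < C /\ forall n, (0 < n)%N -> forall x, S x -> `|x - D n (E n x)| <= C / n%:R `^ s.
Proof.
move=> [E [D [C distC]]]; exists E, D, (Num.max C 1).
split=> [|n n_gt0 x Sx]; first by rewrite lt_max ltr01 orbT.
have ns_gt0 : 0 < n%:R `^ s by apply: powR_gt0; rewrite ltr0n.
have err_le_dist : ((`|x - D n (E n x)|)%:E <= distortion S (E n) (D n))%E.
  by apply: ereal_sup_ubound; exists x.
have : ((n%:R `^ s)%:E * (`|x - D n (E n x)|)%:E <= C%:E)%E.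
  by apply: le_trans (distC n n_gt0); apply: lee_wpmul2l => //; rewrite lee_fin ltW.
rewrite -EFinM lee_fin ler_pdivlMr // mulrC => /le_trans; apply.
by rewrite le_max lexx.
Qed.

(* [c (C n^-s)^(-1/s')] grows like [n^(s/s')], faster than [n] since [s' < s];
   the estimates are done on logarithms. *)
Lemma exists_nat_radius_gap {R : realType} {s s' C c e0 : R} :
  0 < s' -> s' < s -> 0 < C -> 0 < c -> 0 < e0 ->
  exists n : nat,
    [/\ (0 < n)%N, C / n%:R `^ s < e0 & n%:R < c * (C / n%:R `^ s) `^ (- s'^-1)].
Proof.
move=> s'_gt0 s's C_gt0 c_gt0 e0_gt0.
have s_gt0 : 0 < s by apply: lt_trans s's.
pose M := Num.max ((ln C - ln e0) / s) ((ln C - s' * ln c) / (s - s')).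
pose n := Num.Def.archi_bound (expR M).
have M_lt_expn : expR M < n%:R := archi_boundP (expR_ge0 M).
have n_gt0 : 0 < n%:R :> R by apply: lt_trans M_lt_expn; exact: expR_gt0.
have M_lt : M < ln n%:R by rewrite -ltr_expR lnK // posrE.
exists n; set L := ln n%:R in M_lt *.
have nE : n%:R = expR L by rewrite /L lnK.
have CE : C = expR (ln C) by rewrite lnK.
have epsE : C / n%:R `^ s = expR (ln C - s * L) by rewrite /powR gt_eqF // {1}CE expRB.
split; first by rewrite -(ltr0n R).
- have e0E : e0 = expR (ln e0) by rewrite lnK.
  rewrite epsE [X in _ < X]e0E ltr_expR.
  have : (ln C - ln e0) / s < L by apply: le_lt_trans M_lt; rewrite le_max lexx.
  by rewrite ltr_pdivrMr // => ?; nra.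
- have cE : c = expR (ln c) by rewrite lnK.
  rewrite epsE -expRM [X in _ < X * _]cE -expRD {1}nE ltr_expR.
  have : (ln C - s' * ln c) / (s - s') < L.
    by apply: le_lt_trans M_lt; rewrite le_max lexx orbT.
  rewrite ltr_pdivrMr ?subr_gt0 // => ?.
  rewrite -(ltr_pM2r s'_gt0) mulrDl -mulrA mulNr mulVf ?gt_eqF // mulrN1.
  nra.
Qed.

Theorem corollary2p5 (R : realType) (X : completeNormedModType R) (S : set X)
  (P : probability (traceS S) R) (PS : P S = 1%E)
  (s0 : R) (hs0 : 0 <= s0) (hgrowth : growth_order P s0) :
  (optimal_exponent S <= s0%:E)%E.
Proof.
apply: ge_ereal_sup => _ [s [_ /achievable_pointwise_error [E [D [C [C_gt0 err]]]]] <-].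
rewrite lee_fin leNgt; apply/negP => s0s.
pose s' := (s0 + s) / 2.
have [s0s' s's s'_gt0] : [/\ s0 < s', s' < s & 0 < s'] by rewrite /s'; split; lra.
have [e0 [c [e0_gt0 [c_gt0 ball]]]] := hgrowth s' s0s'.
have [n [n_gt0 eps_lt gap]] := exists_nat_radius_gap s'_gt0 s's C_gt0 c_gt0 e0_gt0.
have eps_gt0 : 0 < C / n%:R `^ s by rewrite divr_gt0 // powR_gt0 // ltr0n.
have := codec_cover_bits PS (err n n_gt0) (fun x => ball x _ eps_gt0 eps_lt).
by rewrite leNgt gap.
Qed.
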